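(* Let $k\ge2$, $n\ge k$, and $\beta=\sum_{i=1}^n i^{k-1}$. In the position-randomized auction setting described in the context, for every common initial bid sequence and every common permutation distribution used by the $k-1$ disadvantaged bidders, the adversary ${\mathcal A}$ has a position-randomized strategy under which the expected number of objects he wins is at least $\frac{\beta-1}{n^{k-1}}$.
   Context: Auction model: there are $k$ bidders, one adversary ${\mathcal A}$ and $k-1$ disadvantaged bidders, and $n$ objects auctioned simultaneously. Each object is won by the highest bidder on it; if $m$ bidders tie for the highest bid, each wins with probability $1/m$. A position-randomized bidding algorithm: a bidder chooses an initial sequence $x_1,\dots,x_n$ of positive reals with $\sum x_j\le 1$ (budget) and a probability distribution on permutations $\sigma$ of $\{1,\dots,n\}$; he draws $\sigma$ and bids $x_j$ on object $\sigma(j)$. All disadvantaged bidders use the same initial sequence and the same permutation distribution, drawing their permutations independently; ${\mathcal A}$ knows their algorithm, and his permutation is drawn independently of theirs. *)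

From mathcomp Require Import all_boot all_order all_algebra all_fingroup.
Set Implicit Arguments. Unset Strict Implicit. Unset Printing Implicit Defensive.
Import Order.TTheory GRing.Theory Num.Theory.
Local Open Scope ring_scope.

(* Objects are 'I_n; positions of the initial sequence are also 'I_n. *)

Definition is_bid_seq (R : realFieldType) (n : nat) (x : 'I_n -> R) : Prop :=
  (forall j, 0 < x j) /\ \sum_(j < n) x j <= 1.

Definition is_perm_distr (R : realFieldType) (n : nat) (p : {ffun 'S_n -> R}) : Prop :=
  (forall s, 0 <= p s) /\ \sum_(s : 'S_n) p s = 1.

(* bid on object o: the bidder bids x_j on object s(j), so on o he bids x_(s^-1 o) *)
Definition bid (R : realFieldType) (n : nat) (x : 'I_n -> R) (s : 'S_n) (o : 'I_n) : R :=
  x ((s^-1)%g o).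

(* probability that A (bid a) wins an object against the bids bs of the others:
   0 if someone bids strictly more, otherwise 1/(number of tied highest bidders) *)
Definition win_share (R : realFieldType) (m : nat) (a : R) (bs : 'I_m -> R) : R :=
  if [forall i, bs i <= a] then (1 + #|[set i | bs i == a]|%:R)^-1 else 0.

Definition expected_wins_A (R : realFieldType) (n m : nat)
    (x : 'I_n -> R) (p : {ffun 'S_n -> R}) (y : 'I_n -> R) (q : {ffun 'S_n -> R}) : R :=
  \sum_(sA : 'S_n) \sum_(ss : {ffun 'I_m -> 'S_n})
     (q sA * \prod_(i < m) p (ss i)) *
     \sum_(o < n) win_share (bid y sA o) (fun i => bid x (ss i) o).

(* The adversary draws his permutation uniformly and, at every position j
   except the position j0 of the smallest disadvantaged bid, bids a little more
   than x_j; halving his bid at j0 pays for this.  Order the positions by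
   (x_j, j) and let T_j be the positions ranked at most j, so that
   |T_j| = rank j runs through 1..n.  When A bids from position j <> j0 on an
   object on which all k-1 opponents bid from positions in T_j, he wins it.
   If P_j(o) is the probability that one opponent bids on o from T_j, A thus
   wins at least  sum_(j <> j0) sum_o P_j(o)^(k-1) / n  objects in expectation;
   as sum_o P_j(o) = rank j, the power-mean inequality bounds this below by
   sum_(j <> j0) (rank j)^(k-1) / n^(k-1) = (beta - 1) / n^(k-1). *)

From mathcomp Require Import all_boot all_order all_algebra all_fingroup.
From mathcomp Require Import ring lra.
Set Implicit Arguments. Unset Strict Implicit. Unset Printing Implicit Defensive.
Import Order.TTheory GRing.Theory Num.Theory.
Local Open Scope ring_scope.

Section Rank.
Variables (d : Order.disp_t) (T : orderType d) (I : finType) (f : I -> T).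
Hypothesis f_inj : injective f.

Definition rank (i : I) : nat := #|[set j | (f j <= f i)%O]|.

Lemma rank_inj : injective rank.
Proof.
suff lt_rank i j : (f i < f j)%O -> (rank i < rank j)%N.
  move=> i j eq_ij; apply: f_inj; apply/eqP; rewrite eq_le !leNgt.
  by apply/andP; split; apply/negP => /lt_rank; rewrite eq_ij ltnn.
move=> lt_ij; apply: proper_card; apply/properP; split.
  by apply/subsetP => l; rewrite !inE => /le_trans; apply; apply: ltW.
by exists j; rewrite !inE ?lexx // leNgt lt_ij.
Qed.

Lemma perm_map_rank : perm_eq (map rank (enum I)) (iota 1 #|I|).
Proof.
have rank_in i : rank i \in iota 1 #|I|.
  rewrite mem_iota add1n ltnS max_card andbT.
  by apply/card_gt0P; exists i; rewrite inE.
apply: uniq_perm; rewrite ?iota_uniq ?(map_inj_uniq rank_inj) ?enum_uniq //.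
apply: (uniq_min_size _ _ _).2.
- by rewrite (map_inj_uniq rank_inj) enum_uniq.
- by move=> r /mapP [i _ ->].
- by rewrite size_map size_iota -cardE.
Qed.

Lemma sum_rank (F : nat -> nat) :
  (\sum_i F (rank i) = \sum_(1 <= r < #|I|.+1) F r)%N.
Proof.
rewrite /index_iota subSS subn0 -(perm_big _ perm_map_rank) big_map.
by rewrite big_enum.
Qed.

Lemma exists_rank1 : (0 < #|I|)%N -> exists i, rank i = 1%N.
Proof.
move=> I0; have : 1%N \in map rank (enum I).
  by rewrite (perm_mem perm_map_rank) mem_iota leqnn add1n ltnS.
by case/mapP => i _ rank_i; exists i.
Qed.
End Rank.

Section PowerMean.
Variables (R : realFieldType) (I : finType) (a : I -> R).
Hypothesis a_ge0 : forall i, 0 <= a i.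

Lemma chebyshev_sum_exp m :
  (\sum_i a i) * (\sum_i a i ^+ m) <= #|I|%:R * \sum_i a i ^+ m.+1.
Proof.
have same_sign i j : 0 <= (a i - a j) * (a i ^+ m - a j ^+ m).
  have [le_ij|/ltW le_ji] := lerP (a i) (a j).
    by apply: mulr_le0; rewrite subr_le0 // lerXn2r ?nnegrE.
  by apply: mulr_ge0; rewrite subr_ge0 // lerXn2r ?nnegrE.
have symmetrize : \sum_i \sum_j (a i - a j) * (a i ^+ m - a j ^+ m)
    = (\sum_i \sum_j (a i - a j) * a i ^+ m) *+ 2.
  rewrite mulr2n -[X in _ + X]exchange_big -big_split /=.
  apply: eq_bigr => i _; rewrite -big_split /=.
  by apply: eq_bigr => j _; ring.
have expand : \sum_i \sum_j (a i - a j) * a i ^+ m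
    = #|I|%:R * \sum_i a i ^+ m.+1 - (\sum_i a i) * (\sum_i a i ^+ m).
  transitivity (\sum_i (a i ^+ m.+1 *+ #|I| - (\sum_j a j) * a i ^+ m)).
    apply: eq_bigr => i _; under eq_bigr do rewrite mulrBl.
    by rewrite sumrB sumr_const -mulr_suml exprS.
  by rewrite sumrB sumrMnl -mulr_sumr mulr_natl.
have : 0 <= \sum_i \sum_j (a i - a j) * (a i ^+ m - a j ^+ m).
  by apply: sumr_ge0 => i _; apply: sumr_ge0 => j _; apply: same_sign.
by rewrite symmetrize expand pmulrn_lge0 // subr_ge0.
Qed.

Lemma power_mean_sum m :
  (\sum_i a i) ^+ m.+1 <= #|I|%:R ^+ m * \sum_i a i ^+ m.+1.
Proof.
elim: m => [|m IH]; first by rewrite mul1r.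
have sum_ge0 : 0 <= \sum_i a i by apply: sumr_ge0.
rewrite exprS (le_trans (ler_wpM2l sum_ge0 IH)) //.
rewrite mulrCA exprSr -mulrA ler_wpM2l ?exprn_ge0 //.
exact: chebyshev_sum_exp.
Qed.
End PowerMean.

Lemma card_perm_mapsto n (j o : 'I_n) :
  (#|[set s : 'S_n | s j == o]| * n)%N = n`!.
Proof.
have same_card o' : #|[set s : 'S_n | s j == o']| = #|[set s : 'S_n | s j == o]|.
  rewrite -(card_preimset _ (mulIg (tperm o o'))); apply: eq_card => s.
  by rewrite !inE permM (canF_eq (tpermK o o')) tpermR.
transitivity (\sum_(o' < n) #|[set s : 'S_n | s j == o']|)%N.
  by rewrite (eq_bigr _ (fun o' _ => same_card o')) sum_nat_const card_ord mulnC.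
rewrite (eq_bigr _ (fun o' _ => esym (sum1dep_card _))) -card_Sn -sum1_card.
under eq_bigr do rewrite big_mkcond.
rewrite exchange_big /=; apply: eq_bigr => s _.
by rewrite -big_mkcond (big_pred1 (s j)) // => o'; rewrite eq_sym.
Qed.

Section Auction.
Variables (R : realFieldType) (n : nat).

Definition bid_prob (p : {ffun 'S_n -> R}) (o : 'I_n) (A : {set 'I_n}) : R :=
  \sum_(s : 'S_n) p s * ((s^-1)%g o \in A)%:R.

Lemma bid_prob_ge0 (p : {ffun 'S_n -> R}) o A :
  (forall s, 0 <= p s) -> 0 <= bid_prob p o A.
Proof. by move=> p_ge0; apply: sumr_ge0 => s _; rewrite mulr_ge0. Qed.

Lemma sum_bid_prob p A : is_perm_distr p -> \sum_o bid_prob p o A = #|A|%:R.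
Proof.
case=> _ sum_p; rewrite exchange_big /=.
transitivity (\sum_s p s * #|A|%:R); last by rewrite -mulr_suml sum_p mul1r.
apply: eq_bigr => s _; rewrite -mulr_sumr (reindex_inj (@perm_inj _ s)) /=.
under eq_bigr do rewrite permK.
congr (_ * _); rewrite -sum1_card natr_sum [RHS]big_mkcond.
by apply: eq_bigr => i _; case: (i \in A).
Qed.

Definition uniform_perm : {ffun 'S_n -> R} := [ffun=> n`!%:R^-1].

Lemma uniform_permP : is_perm_distr uniform_perm.
Proof.
split=> [s|]; first by rewrite ffunE invr_ge0 ler0n.
under eq_bigr do rewrite ffunE.
rewrite sumr_const card_Sn -(mulr_natr (n`!%:R^-1)) mulVf //.
by rewrite pnatr_eq0 -lt0n fact_gt0.
Qed.

Lemma bid_prob_uniform_set1 o j : bid_prob uniform_perm o [set j] = n%:R^-1.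
Proof.
have count := card_perm_mapsto j o.
transitivity (n`!%:R^-1 * #|[set s : 'S_n | s j == o]|%:R : R).
  rewrite /bid_prob -sum1dep_card natr_sum mulr_sumr [RHS]big_mkcond /=.
  apply: eq_bigr => s _; rewrite ffunE in_set1 (canF_eq (permKV s)) eq_sym.
  by case: (s j == o); rewrite ?mulr1 ?mulr0.
rewrite -count natrM invfM mulrAC mulVf ?mul1r // pnatr_eq0 -lt0n.
by apply/card_gt0P; exists (tperm j o); rewrite inE tpermL.
Qed.

Lemma win_share_ge0 m (a : R) (bs : 'I_m -> R) : 0 <= win_share a bs.
Proof. by rewrite /win_share; case: ifP => // _; rewrite invr_ge0 addr_ge0 ?ler0n. Qed.

Lemma win_share_eq1 m (a : R) (bs : 'I_m -> R) :
  (forall i, bs i < a) -> win_share a bs = 1.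
Proof.
move=> bs_lt; rewrite /win_share.
have -> : [forall i, bs i <= a] by apply/forallP => i; apply: ltW.
suff -> : [set i | bs i == a] = set0 by rewrite cards0 addr0 invr1.
by apply/setP => i; rewrite !inE lt_eqF.
Qed.

Section Outbidding.
Variables (x y : 'I_n -> R) (J : {pred 'I_n}) (T : 'I_n -> {set 'I_n}).
Hypothesis outbid : forall j l, j \in J -> l \in T j -> x l < y j.

Lemma win_share_ge m (a : 'I_n) (b : 'I_m -> 'I_n) :
  \sum_(j in J) (a == j)%:R * \prod_i (b i \in T j)%:R <= win_share (y a) (x \o b).
Proof.
have [aJ|aNJ] := boolP (a \in J); last first.
  rewrite big1 ?win_share_ge0 // => j jJ.
  suff -> : (a == j) = false by rewrite mul0r.
  by apply: contraNF aNJ => /eqP ->.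
rewrite (bigD1 a) //= eqxx mul1r [X in _ + X]big1 ?addr0; last first.
  by move=> j /andP[_ ja]; rewrite eq_sym (negbTE ja) mul0r.
have [/forallP bT|] := boolP [forall i, b i \in T a].
  rewrite big1 => [|i _]; last by rewrite bT.
  by rewrite win_share_eq1 // => i; apply: outbid.
rewrite negb_forall => /existsP[i biT].
by rewrite (bigD1 i) //= (negbTE biT) mul0r win_share_ge0.
Qed.

Lemma expected_wins_ge m (p q : {ffun 'S_n -> R}) :
  (forall s, 0 <= p s) -> (forall s, 0 <= q s) ->
  \sum_(j in J) \sum_o bid_prob q o [set j] * bid_prob p o (T j) ^+ m
    <= expected_wins_A m x p y q.
Proof.
move=> p_ge0 q_ge0.
pose hit (sA : 'S_n) (ss : {ffun 'I_m -> 'S_n}) o j : R :=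
  (((sA^-1)%g o == j)%:R * \prod_i (((ss i)^-1)%g o \in T j)%:R).
rewrite [leLHS](_ : _ = \sum_(sA : 'S_n) \sum_(ss : {ffun 'I_m -> 'S_n})
    (q sA * \prod_i p (ss i)) * \sum_o \sum_(j in J) hit sA ss o j).
  apply: ler_sum => sA _; apply: ler_sum => ss _.
  rewrite ler_wpM2l ?mulr_ge0 ?prodr_ge0 //.
  by apply: ler_sum => o _; apply: win_share_ge.
have pow o A : bid_prob p o A ^+ m
    = \sum_(ss : {ffun 'I_m -> 'S_n}) \prod_i (p (ss i) * (((ss i)^-1)%g o \in A)%:R).
  by rewrite -[in LHS](card_ord m) -prodr_const bigA_distr_bigA.
symmetry; transitivity (\sum_(sA : 'S_n) \sum_(ss : {ffun 'I_m -> 'S_n}) \sum_o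
    \sum_(j in J) (q sA * \prod_i p (ss i)) * hit sA ss o j).
  apply: eq_bigr => sA _; apply: eq_bigr => ss _; rewrite mulr_sumr.
  by apply: eq_bigr => o _; rewrite mulr_sumr.
under eq_bigr => sA _ do rewrite exchange_big /=.
under eq_bigr => sA _ do under eq_bigr => o _ do rewrite exchange_big /=.
rewrite exchange_big /=; under eq_bigr => o _ do rewrite exchange_big /=.
rewrite exchange_big /=; apply: eq_bigr => j _; apply: eq_bigr => o _.
rewrite pow mulr_suml; apply: eq_bigr => sA _; rewrite mulr_sumr.
by apply: eq_bigr => ss _; rewrite /hit big_split in_set1 /=; ring.
Qed.

Lemma expected_wins_uniform_ge m p : is_perm_distr p ->
  \sum_(j in J) (#|T j|%:R / n%:R) ^+ m.+1
    <= expected_wins_A m.+1 x p y uniform_perm.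
Proof.
move=> p_distr; have [p_ge0 _] := p_distr.
apply: le_trans (expected_wins_ge m.+1 p_ge0 uniform_permP.1).
apply: ler_sum => j _.
under eq_bigr do rewrite bid_prob_uniform_set1; rewrite -mulr_sumr.
have n_gt0 : 0 < n%:R :> R by rewrite ltr0n (leq_ltn_trans (leq0n j) (ltn_ord j)).
have := power_mean_sum (fun o => bid_prob_ge0 o (T j) p_ge0) m.
rewrite sum_bid_prob // card_ord expr_div_n ler_pdivrMr ?exprn_gt0 //.
set S := \sum_o _; suff -> : n%:R^-1 * S * n%:R ^+ m.+1 = n%:R ^+ m * S by [].
by rewrite exprS; field; rewrite gt_eqF.
Qed.
End Outbidding.

(* The half of x j0 saved at position j0 pays for the raises at the other
   n - 1 positions. *)
Definition outbid_seq (x : 'I_n -> R) (j0 : 'I_n) : 'I_n -> R :=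
  fun j => if j == j0 then x j0 / 2 else x j + x j0 / (2 * n%:R).

Section OutbidSeq.
Variables (x : 'I_n -> R) (j0 : 'I_n).
Hypothesis x_bids : is_bid_seq x.

Let d := x j0 / (2 * n%:R).

Let d_gt0 : 0 < d.
Proof.
by rewrite divr_gt0 ?x_bids.1 // mulr_gt0 // ltr0n (leq_ltn_trans (leq0n j0)).
Qed.

Lemma outbid_seq_gt j : j != j0 -> x j < outbid_seq x j0 j.
Proof. by rewrite /outbid_seq => /negbTE ->; rewrite ltrDl. Qed.

Lemma outbid_seqP : is_bid_seq (outbid_seq x j0).
Proof.
have [x_gt0 sum_x] := x_bids.
split=> [j|].
  have [->|/outbid_seq_gt] := eqVneq j j0; first by rewrite /outbid_seq eqxx divr_gt0.
  exact: lt_trans (x_gt0 j).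
have nd : n%:R * d = x j0 / 2.
  by rewrite /d; field; rewrite pnatr_eq0 -lt0n (leq_ltn_trans (leq0n j0)).
have sum_d : \sum_(j | j != j0) d = n%:R * d - d.
  have : \sum_(j < n) d = n%:R * d by rewrite sumr_const card_ord mulr_natl.
  by rewrite (bigD1 j0) //= => <-; rewrite addrC addrK.
rewrite (bigD1 j0) //= {1}/outbid_seq eqxx.
rewrite (eq_bigr (fun j => x j + d)) => [|j /negbTE]; last by rewrite /outbid_seq => ->.
move: sum_x; rewrite (bigD1 j0) //= big_split /= sum_d nd.
have := d_gt0; lra.
Qed.
End OutbidSeq.
End Auction.

Theorem lemma4p2 (R : realFieldType) (k n : nat) :
  (2 <= k)%N -> (k <= n)%N ->
  forall (x : 'I_n -> R) (p : {ffun 'S_n -> R}),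
    is_bid_seq x -> is_perm_distr p ->
    exists (y : 'I_n -> R) (q : {ffun 'S_n -> R}),
      [/\ is_bid_seq y, is_perm_distr q &
        ((\sum_(1 <= i < n.+1) i ^ k.-1)%N%:R - 1) / (n ^ k.-1)%N%:R
          <= expected_wins_A k.-1 x p y q].
Proof.
move=> k_ge2 k_le_n x p x_bids p_distr.
have [m ->] : exists m, k.-1 = m.+1 by exists k.-2; case: k k_ge2 {k_le_n} => [|[|k]].
have n_gt0 : (0 < n)%N by apply: leq_trans k_le_n; apply: leq_trans k_ge2.
pose key j : R *l nat := (x j, val j).
have key_inj : injective key by move=> j l [_ /val_inj].
have [j0 rank_j0] : exists j0, rank key j0 = 1%N.
  by apply: (exists_rank1 key_inj); rewrite card_ord.
exists (outbid_seq x j0), (uniform_perm R n).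
split; [exact: outbid_seqP | exact: uniform_permP |].
pose T j := [set l | (key l <= key j)%O].
have outbid j l : j \in predC1 j0 -> l \in T j -> x l < outbid_seq x j0 j.
  move=> j_ne; rewrite inE lexi_pair => /andP[x_le _].
  exact: le_lt_trans x_le (outbid_seq_gt x_bids j_ne).
apply: le_trans (expected_wins_uniform_ge outbid m p_distr).
have beta : (\sum_j rank key j ^ m.+1 = \sum_(1 <= i < n.+1) i ^ m.+1)%N.
  by rewrite (sum_rank key_inj (expn^~ m.+1)) card_ord.
rewrite -beta natr_sum (bigD1 j0) //= rank_j0.
rewrite exp1n addrC addrK mulr_suml natrX; apply: ler_sum => j _.
by rewrite expr_div_n natrX.
Qed.
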